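(* Let $f:[0,\infty)\to\mathbb{R}$ be differentiable, let $0<a<b<\infty$, and suppose $f'$ is Lebesgue integrable on $[a,b]$. Let $(\alpha,m)\in(0,1]^2$ and $q>1$, and suppose $|f'|^q$ is $(\alpha,m)$-GA-convex on $[0,\max\{a^{1/m},b\}]$. Then \[ \biggl|\frac{b^2f(b)-a^2f(a)}{2}-\int_a^b xf(x)\,dx\biggr|\le\frac{\ln b-\ln a}{2}\Bigl(\frac{1}{\alpha+1}\Bigr)^{1/q}\bigl[L\bigl(a^{3q/(q-1)},b^{3q/(q-1)}\bigr)\bigr]^{1-1/q}\Bigl[|f'(b)|^q+\alpha m\bigl|f'(a^{1/m})\bigr|^q\Bigr]^{1/q}. \]
   Context: For $c>0$, $h:[0,c]\to\mathbb{R}$ and $(\alpha,m)\in(0,1]^2$, $h$ is called $(\alpha,m)$-GA-convex on $[0,c]$ if $h\bigl(x^\lambda y^{m(1-\lambda)}\bigr)\le\lambda^\alpha h(x)+m(1-\lambda^\alpha)h(y)$ for all $x,y\in[0,c]$ and all $\lambda\in[0,1]$ (with the convention $0^0=1$). For $x,y>0$, $x\neq y$, the logarithmic mean is $L(x,y)=\frac{y-x}{\ln y-\ln x}$. *)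

From Stdlib Require Import Reals.
Open Scope R_scope.

(* Real power for nonnegative bases, with the convention 0^0 = 1 and
   0^y = 0 for y <> 0 (only used with y >= 0). *)
Definition rpow (x y : R) : R :=
  if Rlt_dec 0 x then Rpower x y
  else if Req_EM_T y 0 then 1 else 0.

Definition GA_convex (alpha m c : R) (h : R -> R) : Prop :=
  forall x y lam, 0 <= x <= c -> 0 <= y <= c -> 0 <= lam <= 1 ->
    h (rpow x lam * rpow y (m * (1 - lam)))
      <= rpow lam alpha * h x + m * (1 - rpow lam alpha) * h y.

Definition logmean (x y : R) : R := (y - x) / (ln y - ln x).

Definition right_deriv (f : R -> R) (x l : R) : Prop :=
  forall eps, 0 < eps -> exists delta, 0 < delta /\
    forall h, 0 < h < delta -> Rabs ((f (x + h) - f x) / h - l) < eps.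

(* f : [0,oo) -> R is differentiable with derivative f':
   two-sided derivative at interior points, right derivative at 0. *)
Definition diff_on_nonneg (f f' : R -> R) : Prop :=
  (forall x, 0 < x -> derivable_pt_lim f x (f' x)) /\ right_deriv f 0 (f' 0).

From Stdlib Require Import Reals Lra.
From Coquelicot Require Import Coquelicot.
Open Scope R_scope.

(* Let [F(y) = y^2 f(y) - 2 int_a^y x f(x) dx], so that [F' = y^2 f'] on [(0, oo)] and
   the left-hand side is [|F(b) - F(a)| / 2].  Along the geometric path
   [x(t) = b^(1-t) a^t], [t in [0, 1]], the function [g(t) = F(x(t))] has derivative
   [x(t)^3 f'(x(t)) (ln a - ln b)].  GA-convexity with weight [1 - t] bounds
   [|f'(x(t))|^q] by an explicit [ga_bound t], and a scaled Young inequality (pointwise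
   Hoelder) bounds [x(t)^3 |f'(x(t))|] by an explicit [majorant t] whose primitive
   increases by exactly [K = L(a^P, b^P)^(1-1/q) ((A + alpha m B)/(alpha+1))^(1/q)]
   over [[0, 1]], with [P = 3q/(q-1)], [A = |f'(b)|^q] and [B = |f'(a^(1/m))|^q].  A mean value inequality then gives
   [|F(b) - F(a)| <= (ln b - ln a) K], which is the claim.  Working with explicit
   primitives instead of integrals of [|f'|], no integrability of [f'] is needed. *)

Lemma rpow_pos x y : 0 < x -> rpow x y = Rpower x y.
Proof. intro Hx; unfold rpow; destruct (Rlt_dec 0 x); [reflexivity | lra]. Qed.

Lemma rpow_ge0 x y : 0 <= rpow x y.
Proof.
  unfold rpow; destruct (Rlt_dec 0 x).
  - left; apply exp_pos.
  - destruct (Req_EM_T y 0); lra.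
Qed.

Lemma rpow_nonpos x y : x <= 0 -> y <> 0 -> rpow x y = 0.
Proof.
  intros Hx Hy; unfold rpow; destruct (Rlt_dec 0 x); [lra |].
  destruct (Req_EM_T y 0); [contradiction | reflexivity].
Qed.

Lemma rpow_mult_distr x y z : 0 <= x -> 0 <= y -> z <> 0 ->
  rpow (x * y) z = rpow x z * rpow y z.
Proof.
  intros [Hx | <-] [Hy | <-] Hz;
    try (rewrite ?Rmult_0_l, ?Rmult_0_r, rpow_nonpos by lra; ring).
  rewrite !rpow_pos by nra. symmetry; apply Rpower_mult_distr; lra.
Qed.

Lemma exp_convex l x y : 0 <= l <= 1 ->
  exp (l * x + (1 - l) * y) <= l * exp x + (1 - l) * exp y.
Proof.
  intros Hl. set (z := l * x + (1 - l) * y).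
  (* the tangent line of [exp] at [z] lies below the graph *)
  assert (tangent : forall w, exp z * (1 + (w - z)) <= exp w).
  { intros w. replace w with (z + (w - z)) at 2 by ring. rewrite exp_plus.
    apply Rmult_le_compat_l; [left; apply exp_pos | apply exp_ineq1_le]. }
  assert (E : l * (exp z * (1 + (x - z))) + (1 - l) * (exp z * (1 + (y - z))) = exp z)
    by (unfold z; ring).
  rewrite <- E. apply Rplus_le_compat; apply Rmult_le_compat_l; try lra; apply tangent.
Qed.

Lemma young_exp q U W : 1 < q ->
  exp (U + W) <= exp ((q / (q - 1)) * U) / (q / (q - 1)) + exp (q * W) / q.
Proof.
  intros Hq.
  assert (Hl : 0 <= (q - 1) / q <= 1).
  { split; [apply Rdiv_le_0_compat; lra |].
    apply Rmult_le_reg_r with q; [lra |]. unfold Rdiv; rewrite Rmult_assoc, Rinv_l; lra. }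
  pose proof (exp_convex _ ((q / (q - 1)) * U) (q * W) Hl) as H.
  replace ((q - 1) / q * (q / (q - 1) * U) + (1 - (q - 1) / q) * (q * W)) with (U + W)
    in H by (field; lra).
  replace (exp (q / (q - 1) * U) / (q / (q - 1))) with ((q - 1) / q * exp (q / (q - 1) * U))
    by (field; lra).
  replace (exp (q * W) / q) with ((1 - (q - 1) / q) * exp (q * W)) by (field; lra).
  exact H.
Qed.

(* Scaled Young inequality, the pointwise form of Hoelder's inequality used in the
   estimate: with [K = Lm^(1-1/q) V^(1/q)] and [p = q/(q-1)], a product [e^s * y]
   with [y^q <= psi] is bounded by [K (e^(ps)/(p Lm) + psi/(q V))].  The degenerate
   case [V = 0] forces [psi = 0], hence [y = 0]. *)
Lemma scaled_young q Lm V y psi s : 1 < q -> 0 < Lm -> 0 <= V -> 0 <= y ->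
  rpow y q <= psi -> (V = 0 -> psi = 0) ->
  exp s * y <= Rpower Lm (1 - 1 / q) * rpow V (1 / q) *
     (exp ((q / (q - 1)) * s) / ((q / (q - 1)) * Lm) + psi / (q * V)).
Proof.
  intros Hq HL HV Hy Hpsi HV0.
  assert (Hq0 : 1 / q <> 0) by (apply Rgt_not_eq, Rdiv_lt_0_compat; lra).
  assert (Hp : 0 < q / (q - 1)) by (apply Rdiv_lt_0_compat; lra).
  destruct HV as [HV | <-].
  2:{ specialize (HV0 eq_refl); subst psi.
      assert (Hy0 : y = 0).
      { destruct Hy as [Hy | <-]; [| reflexivity].
        rewrite rpow_pos in Hpsi by lra. unfold Rpower in Hpsi.
        pose proof (exp_pos (q * ln y)); lra. }
      rewrite Hy0, (rpow_nonpos 0) by lra. lra. }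
  destruct Hy as [Hy | <-].
  2:{ rewrite Rmult_0_r. apply Rmult_le_pos.
      - rewrite rpow_pos by lra. left; apply Rmult_lt_0_compat; apply exp_pos.
      - pose proof (rpow_ge0 0 q).
        apply Rplus_le_le_0_compat; apply Rdiv_le_0_compat;
          try (left; apply exp_pos); try lra; apply Rmult_lt_0_compat; lra. }
  rewrite rpow_pos in Hpsi |- * by lra.
  pose proof (young_exp q (s - (1 - 1 / q) * ln Lm) (ln y - (1 / q) * ln V) Hq) as Y.
  replace (q / (q - 1) * (s - (1 - 1 / q) * ln Lm)) with (q / (q - 1) * s + - ln Lm)
    in Y by (field; lra).
  replace (q * (ln y - 1 / q * ln V)) with (q * ln y + - ln V) in Y by (field; lra).
  rewrite (exp_plus (q / (q - 1) * s)), (exp_plus (q * ln y)), !exp_Ropp, !exp_ln in Y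
    by lra.
  assert (E : exp s * y = exp (s - (1 - 1 / q) * ln Lm + (ln y - 1 / q * ln V)) *
                            (Rpower Lm (1 - 1 / q) * Rpower V (1 / q))).
  { unfold Rpower. rewrite <- exp_plus, <- exp_plus.
    replace (s - (1 - 1 / q) * ln Lm + (ln y - 1 / q * ln V) +
             ((1 - 1 / q) * ln Lm + 1 / q * ln V)) with (s + ln y) by ring.
    rewrite exp_plus, exp_ln by lra. reflexivity. }
  rewrite E, Rmult_comm. apply Rmult_le_compat_l.
  { left; apply Rmult_lt_0_compat; apply exp_pos. }
  eapply Rle_trans; [exact Y |].
  apply Rplus_le_compat.
  - right; field; lra.
  - replace (psi / (q * V)) with (psi * / V / q) by (field; lra).
    apply Rmult_le_compat_r; [left; apply Rinv_0_lt_compat; lra |].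
    apply Rmult_le_compat_r; [left; apply Rinv_0_lt_compat; lra | exact Hpsi].
Qed.

Lemma mean_value_inequality (g g' h h' : R -> R) u v : u <= v ->
  (forall t, u < t < v -> is_derive g t (g' t)) ->
  (forall t, u < t < v -> is_derive h t (h' t)) ->
  (forall t, u <= t <= v -> continuity_pt g t) ->
  (forall t, u <= t <= v -> continuity_pt h t) ->
  (forall t, u <= t <= v -> Rabs (g' t) <= h' t) ->
  Rabs (g v - g u) <= h v - h u.
Proof.
  intros Huv Dg Dh Cg Ch Hbound.
  (* [h - s g] is nondecreasing on [u, v] for both signs [s] *)
  assert (increment : forall s, Rabs s <= 1 -> s * (g v - g u) <= h v - h u).
  { intros s Hs.
    destruct (MVT_gen (fun t => h t - s * g t) u v (fun t => h' t - s * g' t))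
      as [c [Hc Ec]]; rewrite Rmin_left, Rmax_right in * by lra.
    - intros t Ht. apply (is_derive_minus h (fun t => s * g t)); [auto |].
      apply (is_derive_scal g); auto.
    - intros t Ht. apply continuity_pt_minus; [auto |].
      apply continuity_pt_mult; [apply continuity_pt_const; intros ? ?; reflexivity | auto].
    - assert (s * g' c <= h' c).
      { apply Rle_trans with (Rabs (s * g' c)); [apply Rle_abs |].
        rewrite Rabs_mult. pose proof (Hbound c Hc). pose proof (Rabs_pos (g' c)). nra. }
      nra. }
  apply Rabs_le; split.
  - pose proof (increment (-1)) as H. rewrite Rabs_left in H by lra. lra.
  - pose proof (increment 1) as H. rewrite Rabs_R1 in H. lra.
Qed.

Definition one_minus_pow (al t : R) : R := rpow (1 - t) (al + 1).

Lemma one_minus_pow_derive al t : 0 < al -> t < 1 ->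
  is_derive (one_minus_pow al) t (-(al + 1) * rpow (1 - t) al).
Proof.
  intros Hal Ht.
  apply is_derive_ext_loc with (f := fun t => exp ((al + 1) * ln (1 - t))).
  { unfold one_minus_pow. assert (Hp : 0 < 1 - t) by lra.
    exists (mkposreal _ Hp). intros y Hy.
    change (Rabs (y - t) < 1 - t) in Hy. apply Rabs_lt_between in Hy.
    rewrite rpow_pos; [reflexivity | lra]. }
  rewrite rpow_pos by lra.
  replace (-(al + 1) * Rpower (1 - t) al) with
    ((al + 1) * (- (1) * / (1 + - t)) * exp ((al + 1) * ln (1 + - t))).
  { auto_derive; [lra | reflexivity]. }
  unfold Rpower. replace (1 + - t) with (1 - t) by ring.
  replace ((al + 1) * ln (1 - t)) with (al * ln (1 - t) + ln (1 - t)) by ring.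
  rewrite exp_plus, exp_ln by lra. field. lra.
Qed.

Lemma one_minus_pow_continuous al t : 0 < al -> t <= 1 ->
  continuity_pt (one_minus_pow al) t.
Proof.
  intros Hal [Ht | ->].
  { apply continuity_pt_filterlim.
    apply (@ex_derive_continuous R_AbsRing R_NormedModule).
    eexists; exact (one_minus_pow_derive al t Hal Ht). }
  (* at [t = 1]: [(1-x)^(al+1) <= |1-x|] near [1] *)
  intros eps He. exists (Rmin eps 1). unfold one_minus_pow. split; [apply Rmin_pos; lra |].
  intros x [_ Hx]; simpl in *; unfold R_dist in *.
  rewrite Rminus_diag, (rpow_nonpos 0) by lra.
  pose proof (Rmin_l eps 1); pose proof (Rmin_r eps 1).
  apply Rabs_lt_between in Hx.
  destruct (Rle_lt_dec (1 - x) 0) as [Hc | Hc].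
  - rewrite rpow_nonpos, Rminus_diag, Rabs_R0 by lra; lra.
  - rewrite rpow_pos, Rminus_0_r, Rabs_pos_eq by (try left; try apply exp_pos; lra).
    unfold Rpower.
    replace ((al + 1) * ln (1 - x)) with (al * ln (1 - x) + ln (1 - x)) by ring.
    rewrite exp_plus, exp_ln by lra.
    assert (exp (al * ln (1 - x)) < 1).
    { assert (ln (1 - x) < 0) by (rewrite <- ln_1; apply ln_increasing; lra).
      rewrite <- exp_0 at 2. apply exp_increasing. nra. }
    nra.
Qed.

Definition parts_fun (f : R -> R) (a y : R) : R :=
  y ^ 2 * f y - 2 * RInt (fun x => x * f x) a y.

Section PartsFunction.

Variables (f f' : R -> R) (a : R).
Hypothesis Hderiv : forall x, 0 < x -> derivable_pt_lim f x (f' x).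
Hypothesis Ha : 0 < a.

Lemma weighted_continuous z : 0 < z -> continuous (fun x => x * f x) z.
Proof.
  intros Hz.
  apply (@continuous_mult R_UniformSpace R_AbsRing (fun x => x) f); [apply continuous_id |].
  apply (@ex_derive_continuous R_AbsRing R_NormedModule).
  exists (f' z). apply is_derive_Reals; auto.
Qed.

Lemma parts_fun_derive y : 0 < y -> is_derive (parts_fun f a) y (y ^ 2 * f' y).
Proof.
  intros Hy.
  assert (Dsq : is_derive (fun y => y ^ 2) y (2 * y)) by (auto_derive; [auto | ring]).
  assert (Df : is_derive f y (f' y)) by (apply is_derive_Reals; auto).
  (* [x |-> x f x] is continuous on a neighbourhood of [[a, y]], which lies in [(0, oo)] *)
  assert (Dint : is_derive (RInt (fun x => x * f x) a) y (y * f y)).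
  { apply (is_derive_RInt (fun x => x * f x) _ a); [| apply weighted_continuous; lra].
    assert (Hp : 0 < y / 2) by lra.
    exists (mkposreal _ Hp). intros c Hc. change (Rabs (c - y) < y / 2) in Hc.
    apply Rabs_lt_between in Hc.
    apply (@RInt_correct R_CompleteNormedModule), (@ex_RInt_continuous R_CompleteNormedModule).
    intros z Hz. apply weighted_continuous.
    assert (0 < Rmin a c) by (apply Rmin_pos; lra). lra. }
  pose proof (is_derive_minus _ _ _ _ _
                (is_derive_mult _ _ _ _ _ Dsq Df ltac:(intros; apply Rmult_comm))
                (is_derive_scal _ _ 2 _ Dint)) as D.
  simpl in D. unfold mult, plus, minus, opp in D; simpl in D.
  replace (y ^ 2 * f' y) with (2 * y * f y + y ^ 2 * f' y + - (2 * (y * f y))) by ring.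
  exact D.
Qed.

Lemma parts_fun_increment b (pr : Riemann_integrable (fun x => x * f x) a b) :
  (b ^ 2 * f b - a ^ 2 * f a) / 2 - RiemannInt pr = (parts_fun f a b - parts_fun f a a) / 2.
Proof.
  unfold parts_fun. rewrite <- (RInt_Reals _ _ _ pr), RInt_point.
  unfold zero; simpl. field.
Qed.

End PartsFunction.

Section Majorant.

Variables (a b alpha m q A B : R).
Hypotheses (Ha : 0 < a) (Hab : a < b) (Halpha : 0 < alpha) (Hm : 0 < m) (Hq : 1 < q)
           (HA : 0 <= A) (HB : 0 <= B).

(* logarithm of the geometric path [b^(1-t) a^t] *)
Definition logpath (t : R) : R := t * ln a + (1 - t) * ln b.

Definition conj_exp : R := q / (q - 1).
Definition Pexp : R := 3 * q / (q - 1).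

(* the logarithmic mean [L(a^P, b^P)], written through logarithms *)
Definition Lmean : R := (exp (Pexp * ln b) - exp (Pexp * ln a)) / (Pexp * ln b - Pexp * ln a).

(* the average [(A + alpha m B)/(alpha + 1)] of the GA-convexity bound over [[0, 1]] *)
Definition Vmean : R := (A + alpha * m * B) / (alpha + 1).

(* the constant [K] of the estimate: the right-hand side is [(ln b - ln a) K / 2] *)
Definition Kconst : R := Rpower Lmean (1 - 1 / q) * rpow Vmean (1 / q).

(* the GA-convexity bound [lam^alpha A + m (1 - lam^alpha) B] at [lam = 1 - t] *)
Definition ga_bound (t : R) : R :=
  rpow (1 - t) alpha * A + m * (1 - rpow (1 - t) alpha) * B.

(* the Young bound [K (x(t)^P / (p L) + ga_bound t / (q V))] for [x(t)^3 |f'(x(t))|] *)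
Definition majorant (t : R) : R :=
  Kconst * (exp (Pexp * logpath t) / (conj_exp * Lmean) + ga_bound t / (q * Vmean)).

Definition primitive (t : R) : R :=
  Kconst * ((exp (Pexp * logpath t) - exp (Pexp * ln b)) / (Pexp * (ln a - ln b))
              / (conj_exp * Lmean)
            + (A + m * B * ((alpha + 1) * t - 1)) / (alpha + 1) / (q * Vmean)
            + (m * B - A) / (alpha + 1) / (q * Vmean) * one_minus_pow alpha t).

Lemma log_ab : ln a < ln b.
Proof. apply ln_increasing; lra. Qed.

Lemma Pexp_pos : 0 < Pexp.
Proof. unfold Pexp. apply Rdiv_lt_0_compat; lra. Qed.

Lemma Lmean_pos : 0 < Lmean.
Proof.
  pose proof log_ab; pose proof Pexp_pos.
  apply Rdiv_lt_0_compat; [| nra].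
  assert (exp (Pexp * ln a) < exp (Pexp * ln b)) by (apply exp_increasing; nra). lra.
Qed.

Lemma Vmean_ge0 : 0 <= Vmean.
Proof.
  unfold Vmean. apply Rdiv_le_0_compat; [| lra].
  assert (0 <= alpha * m * B) by (apply Rmult_le_pos; [nra | lra]). lra.
Qed.

Lemma ga_bound_degenerate t : Vmean = 0 -> ga_bound t = 0.
Proof.
  intros HV. unfold Vmean in HV.
  assert (HAB : A + alpha * m * B = 0).
  { apply (Rmult_eq_reg_r (/ (alpha + 1))); [rewrite Rmult_0_l; exact HV |].
    apply Rinv_neq_0_compat; lra. }
  assert (0 <= alpha * m * B) by (apply Rmult_le_pos; [nra | lra]).
  assert (HA0 : A = 0) by lra.
  assert (HB0 : B = 0) by (assert (0 < alpha * m) by nra; nra).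
  unfold ga_bound. rewrite HA0, HB0. ring.
Qed.

Lemma primitive_derive t : t < 1 -> is_derive primitive t (majorant t).
Proof.
  intros Ht. pose proof log_ab; pose proof Pexp_pos.
  pose proof (one_minus_pow_derive alpha t Halpha Ht) as DR.
  unfold primitive, majorant, ga_bound, logpath.
  auto_derive.
  - exists (-(alpha + 1) * rpow (1 - t) alpha). exact DR.
  - replace (Derive (fun x => one_minus_pow alpha x) t)
      with (-(alpha + 1) * rpow (1 - t) alpha) by (symmetry; apply is_derive_unique, DR).
    replace (1 + - t) with (1 - t) by ring. unfold Rdiv.
    set (c1 := / (conj_exp * Lmean)); set (c2 := / (q * Vmean)).
    field. split; nra.
Qed.

Lemma primitive_continuous t : t <= 1 -> continuity_pt primitive t.
Proof.
  intros [Ht | ->].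
  { apply continuity_pt_filterlim, (@ex_derive_continuous R_AbsRing R_NormedModule).
    exists (majorant t). apply primitive_derive, Ht. }
  (* at [t = 1] only the term [one_minus_pow alpha] is not differentiable *)
  pose proof (one_minus_pow_continuous alpha 1 Halpha (Rle_refl 1)) as C.
  set (c := Kconst * ((m * B - A) / (alpha + 1) / (q * Vmean))).
  set (smooth := fun t =>
         Kconst * ((exp (Pexp * logpath t) - exp (Pexp * ln b)) / (Pexp * (ln a - ln b))
                     / (conj_exp * Lmean)
                   + (A + m * B * ((alpha + 1) * t - 1)) / (alpha + 1) / (q * Vmean))).
  apply continuity_pt_ext with (f := (smooth + fct_cte c * one_minus_pow alpha)%F).
  { intros x. unfold plus_fct, mult_fct, fct_cte, smooth, c, primitive. ring. }
  apply continuity_pt_plus.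
  - apply continuity_pt_filterlim, (@ex_derive_continuous R_AbsRing R_NormedModule).
    unfold smooth, logpath. auto_derive. exact I.
  - apply continuity_pt_mult; [apply continuity_pt_const; intros ? ? | exact C]; reflexivity.
Qed.

Lemma primitive_0 : primitive 0 = 0.
Proof.
  unfold primitive, one_minus_pow, logpath.
  replace (0 * ln a + (1 - 0) * ln b) with (ln b) by ring.
  rewrite Rminus_0_r, rpow_pos by lra. unfold Rpower. rewrite ln_1, Rmult_0_r, exp_0.
  unfold Rdiv. ring.
Qed.

(* the total increase [K]; it uses [1/p + 1/q = 1] when [V > 0] and [K = 0] otherwise *)
Lemma primitive_1 : primitive 1 = Kconst.
Proof.
  pose proof log_ab; pose proof Pexp_pos; pose proof Lmean_pos.
  unfold primitive, one_minus_pow, logpath.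
  replace (1 * ln a + (1 - 1) * ln b) with (ln a) by ring.
  rewrite Rminus_diag, (rpow_nonpos 0) by lra.
  replace ((exp (Pexp * ln a) - exp (Pexp * ln b)) / (Pexp * (ln a - ln b))) with Lmean
    by (unfold Lmean; field; split; nra).
  replace ((A + m * B * ((alpha + 1) * 1 - 1)) / (alpha + 1)) with Vmean
    by (unfold Vmean; field; lra).
  destruct Vmean_ge0 as [HV | HV].
  - unfold conj_exp. field. repeat split; lra.
  - assert (Hq0 : 1 / q <> 0) by (apply Rgt_not_eq, Rdiv_lt_0_compat; lra).
    unfold Kconst. rewrite <- HV, (rpow_nonpos 0 (1 / q)) by (exact Hq0 || lra). ring.
Qed.

Lemma logmean_Pexp : logmean (rpow a Pexp) (rpow b Pexp) = Lmean.
Proof.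
  unfold logmean, Lmean. rewrite !rpow_pos by lra. unfold Rpower. rewrite !ln_exp.
  f_equal; ring.
Qed.

Lemma rhs_eq :
  (ln b - ln a) / 2 * rpow (1 / (alpha + 1)) (1 / q)
    * rpow (logmean (rpow a Pexp) (rpow b Pexp)) (1 - 1 / q)
    * rpow (A + alpha * m * B) (1 / q)
  = (ln b - ln a) * Kconst / 2.
Proof.
  assert (Hq0 : 1 / q <> 0) by (apply Rgt_not_eq, Rdiv_lt_0_compat; lra).
  assert (HAB : 0 <= A + alpha * m * B)
    by (assert (0 <= alpha * m * B) by (apply Rmult_le_pos; [nra | lra]); lra).
  rewrite logmean_Pexp, (rpow_pos Lmean) by exact Lmean_pos.
  unfold Kconst, Vmean.
  replace ((A + alpha * m * B) / (alpha + 1)) with (1 / (alpha + 1) * (A + alpha * m * B))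
    by (field; lra).
  rewrite rpow_mult_distr by (try apply Rdiv_le_0_compat; lra).
  field.
Qed.

Lemma majorant_dominates t y : 0 <= y -> rpow y q <= ga_bound t ->
  exp (logpath t) ^ 3 * y <= majorant t.
Proof.
  intros Hy Hbound.
  pose proof (scaled_young q Lmean Vmean y (ga_bound t) (3 * logpath t) Hq Lmean_pos
                Vmean_ge0 Hy Hbound (ga_bound_degenerate t)) as Y.
  replace (q / (q - 1) * (3 * logpath t)) with (Pexp * logpath t) in Y
    by (unfold Pexp; field; lra).
  replace (exp (logpath t) ^ 3) with (exp (3 * logpath t))
    by (replace (3 * logpath t) with (logpath t + logpath t + logpath t) by ring;
        rewrite !exp_plus; ring).
  exact Y.
Qed.

End Majorant.

Section PathEstimate.

Variables (f f' : R -> R) (a b alpha m q : R).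
Hypothesis Hderiv : forall x, 0 < x -> derivable_pt_lim f x (f' x).
Hypotheses (Ha : 0 < a) (Hab : a < b) (Halpha : 0 < alpha) (Hm : 0 < m) (Hq : 1 < q).
Hypothesis Hconv : GA_convex alpha m (Rmax (rpow a (1 / m)) b)
                     (fun x => rpow (Rabs (f' x)) q).

Let A : R := rpow (Rabs (f' b)) q.
Let B : R := rpow (Rabs (f' (rpow a (1 / m)))) q.

(* GA-convexity between [b] and [a^(1/m)] with weight [1 - t] *)
Lemma ga_convex_on_path t : 0 <= t <= 1 ->
  rpow (Rabs (f' (exp (logpath a b t)))) q <= ga_bound alpha m A B t.
Proof.
  intros Ht.
  assert (Hx : rpow b (1 - t) * rpow (rpow a (1 / m)) (m * (1 - (1 - t)))
               = exp (logpath a b t)).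
  { rewrite (rpow_pos a), (rpow_pos b), rpow_pos by (try apply exp_pos; lra).
    unfold Rpower, logpath. rewrite ln_exp, <- exp_plus. f_equal.
    field. lra. }
  rewrite <- Hx. apply Hconv.
  - split; [lra | apply Rmax_r].
  - split; [apply rpow_ge0 | apply Rmax_l].
  - lra.
Qed.

Definition path_fun (t : R) : R := parts_fun f a (exp (logpath a b t)).

Definition path_deriv (t : R) : R :=
  exp (logpath a b t) ^ 3 * f' (exp (logpath a b t)) * (ln a - ln b).

Lemma path_fun_derive t : is_derive path_fun t (path_deriv t).
Proof.
  assert (Dexp : is_derive (fun t => exp (logpath a b t)) t
                   (exp (logpath a b t) * (ln a - ln b))).
  { unfold logpath. auto_derive; [exact I |]. replace (1 + - t) with (1 - t) by ring. ring. }
  pose proof (is_derive_comp _ _ t _ _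
                (parts_fun_derive f f' a Hderiv Ha _ (exp_pos (logpath a b t))) Dexp) as D.
  unfold path_fun, path_deriv. simpl in D. unfold scal in D; simpl in D; unfold mult in D; simpl in D.
  replace (exp (logpath a b t) ^ 3 * f' (exp (logpath a b t)) * (ln a - ln b)) with
    (exp (logpath a b t) * (ln a - ln b) * (exp (logpath a b t) ^ 2 * f' (exp (logpath a b t))))
    by ring.
  exact D.
Qed.

Lemma path_deriv_bound t : 0 <= t <= 1 ->
  Rabs (path_deriv t) <= (ln b - ln a) * majorant a b alpha m q A B t.
Proof.
  intros Ht.
  assert (Hlog : ln a < ln b) by (apply ln_increasing; lra).
  assert (HA : 0 <= A) by apply rpow_ge0.
  assert (HB : 0 <= B) by apply rpow_ge0.
  pose proof (majorant_dominates a b alpha m q A B Ha Hab Halpha Hm Hq HA HB t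
                _ (Rabs_pos _) (ga_convex_on_path t Ht)) as Hdom.
  unfold path_deriv.
  rewrite Rabs_mult, Rabs_mult, (Rabs_left (ln a - ln b)), Rabs_pos_eq by
    (try apply pow_le; try (left; apply exp_pos); lra).
  replace (- (ln a - ln b)) with (ln b - ln a) by ring.
  rewrite Rmult_comm. apply Rmult_le_compat_l; lra.
Qed.

Lemma path_fun_0 : path_fun 0 = parts_fun f a b.
Proof.
  unfold path_fun, logpath. replace (0 * ln a + (1 - 0) * ln b) with (ln b) by ring.
  rewrite exp_ln by lra. reflexivity.
Qed.

Lemma path_fun_1 : path_fun 1 = parts_fun f a a.
Proof.
  unfold path_fun, logpath. replace (1 * ln a + (1 - 1) * ln b) with (ln a) by ring.
  rewrite exp_ln by lra. reflexivity.
Qed.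

Lemma path_increment_bound :
  Rabs (path_fun 1 - path_fun 0) <= (ln b - ln a) * Kconst a b alpha m q A B.
Proof.
  assert (HA : 0 <= A) by apply rpow_ge0.
  assert (HB : 0 <= B) by apply rpow_ge0.
  assert (MVI : Rabs (path_fun 1 - path_fun 0)
                <= (ln b - ln a) * primitive a b alpha m q A B 1
                   - (ln b - ln a) * primitive a b alpha m q A B 0).
  { apply (mean_value_inequality path_fun path_deriv
             (fun t => (ln b - ln a) * primitive a b alpha m q A B t)
             (fun t => (ln b - ln a) * majorant a b alpha m q A B t)); try lra.
    - intros t _. apply path_fun_derive.
    - intros t Ht. apply (is_derive_scal (primitive a b alpha m q A B)).
      apply primitive_derive; (assumption || lra).
    - intros t _. apply continuity_pt_filterlim.
      apply (@ex_derive_continuous R_AbsRing R_NormedModule).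
      exists (path_deriv t). apply path_fun_derive.
    - intros t Ht.
      apply continuity_pt_mult; [apply continuity_pt_const; intros ? ?; reflexivity |].
      apply primitive_continuous; (assumption || lra).
    - exact path_deriv_bound. }
  rewrite primitive_0, primitive_1, Rmult_0_r, Rminus_0_r in MVI by assumption.
  exact MVI.
Qed.

End PathEstimate.

Theorem theorem3p2 (f f' : R -> R) (a b alpha m q : R)
  (Hf : diff_on_nonneg f f')
  (Ha : 0 < a) (Hab : a < b)
  (Halpha : 0 < alpha <= 1) (Hm : 0 < m <= 1) (Hq : 1 < q)
  (Hconv : GA_convex alpha m (Rmax (rpow a (1 / m)) b)
             (fun x => rpow (Rabs (f' x)) q))
  (pr : Riemann_integrable (fun x => x * f x) a b) :
  Rabs ((b ^ 2 * f b - a ^ 2 * f a) / 2 - RiemannInt pr)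
  <= (ln b - ln a) / 2
     * rpow (1 / (alpha + 1)) (1 / q)
     * rpow (logmean (rpow a (3 * q / (q - 1))) (rpow b (3 * q / (q - 1))))
            (1 - 1 / q)
     * rpow (rpow (Rabs (f' b)) q
             + alpha * m * rpow (Rabs (f' (rpow a (1 / m)))) q) (1 / q).
Proof.
  destruct Hf as [Hderiv _].
  set (A := rpow (Rabs (f' b)) q); set (B := rpow (Rabs (f' (rpow a (1 / m)))) q).
  assert (HA : 0 <= A) by apply rpow_ge0.
  assert (HB : 0 <= B) by apply rpow_ge0.
  assert (Hal : 0 < alpha) by lra.
  assert (Hm0 : 0 < m) by lra.
  change (3 * q / (q - 1)) with (Pexp q).
  rewrite parts_fun_increment, (rhs_eq a b alpha m q A B) by assumption.
  pose proof (path_increment_bound f f' a b alpha m q Hderiv Ha Hab Hal Hm0 Hq Hconv) as Hg.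
  rewrite path_fun_0, path_fun_1, Rabs_minus_sym in Hg by assumption.
  unfold Rdiv. rewrite Rabs_mult, (Rabs_pos_eq (/ 2)) by lra.
  apply Rmult_le_compat_r; [lra | exact Hg].
Qed.
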